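(* For every positive integer $n$ there exists an instance of the myopic best-response dynamics described below (a graph with nonnegative embedding weights, features, a linear threshold classifier, and a scaled 2-norm cost) in which exactly one user moves in the first round and this single move triggers a cascade so that in each of the rounds $1,2,\dots,n$ some user moves.
   Context: Users $i$ have features $x_i\in\mathbb{R}^\ell$; embeddings $\phi(x_i;x_{-i})=\widetilde{w}_{ii}x_i+\sum_{j\neq i}\widetilde{w}_{ji}x_j$ with $\widetilde{w}_{ji}\ge0$ (user $j$ influences user $i$ iff $\widetilde{w}_{ji}>0$). Classifier: $h_{\theta,b}(x_i;x_{-i})=\mathrm{sign}(\theta^\top\phi(x_i;x_{-i})+b)$, $\mathrm{sign}(0)=+1$. Cost $c_\beta(x,x')=\beta\|x-x'\|_2$ for some $\beta>0$, so users move at most distance $2/\beta$. Dynamics: $x_i^{(0)}=x_i$; at each round $t\ge1$ all users update concurrently; user $i$ changes her features only if she is currently classified $-1$ and some $x'$ with $h(x';x^{(t-1)}_{-i})=+1$ has $c_\beta(x_i^{(t-1)},x')\le2$, in which case she moves to the minimum-cost such point (embedding exactly on the decision boundary); otherwise she stays. User $i$ ''moves at round $t$'' if $x_i^{(t)}\neq x_i^{(t-1)}$. *)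

From HB Require Import structures.
From mathcomp Require Import all_boot all_order all_algebra.
From mathcomp Require Import reals.
Set Implicit Arguments. Unset Strict Implicit. Unset Printing Implicit Defensive.
Import Order.TTheory GRing.Theory Num.Theory.
Local Open Scope ring_scope.

Section Dyn.
Variables (R : realType) (m l : nat).

(* Features of all users: X i : 'rV_l.  Weights: W j i = w~_{ji} (j influences i). *)
Definition features := 'I_m -> 'rV[R]_l.

Definition norm2 (v : 'rV[R]_l) : R := Num.sqrt (\sum_(k < l) (v 0 k) ^+ 2).

Definition cost (beta : R) (x x' : 'rV[R]_l) : R := beta * norm2 (x - x').

Definition dotp (theta v : 'rV[R]_l) : R := \sum_(k < l) theta 0 k * v 0 k.

Definition embed (W : 'M[R]_m) (X : features) (i : 'I_m) : 'rV[R]_l :=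
  \sum_(j < m) W j i *: X j.

Definition upd (X : features) (i : 'I_m) (x' : 'rV[R]_l) : features :=
  fun j => if j == i then x' else X j.

(* h = +1 iff theta^T phi + b >= 0  (sign(0) = +1) *)
Definition positive (W : 'M[R]_m) (theta : 'rV[R]_l) (b : R)
  (X : features) (i : 'I_m) : Prop :=
  0 <= dotp theta (embed W X i) + b.

Definition step (W : 'M[R]_m) (theta : 'rV[R]_l) (b beta : R)
  (X Y : features) : Prop :=
  forall i : 'I_m,
    let feas := fun x' => positive W theta b (upd X i x') i in
    let can_move := ~ positive W theta b X i /\
                    (exists x', feas x' /\ cost beta (X i) x' <= 2) in
    (can_move -> feas (Y i) /\
         (forall x', feas x' -> cost beta (X i) (Y i) <= cost beta (X i) x')) /\
    (~ can_move -> Y i = X i).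

Definition dynamics (W : 'M[R]_m) (theta : 'rV[R]_l) (b beta : R)
  (X0 : features) (traj : nat -> features) : Prop :=
  traj 0%N = X0 /\ forall t, step W theta b beta (traj t) (traj t.+1).

(* user i moves at round t >= 1 *)
Definition moves (traj : nat -> features) (t : nat) (i : 'I_m) : Prop :=
  traj t i <> traj t.-1 i.

End Dyn.

(* Take n users on a directed path with one-dimensional features, theta = 1,
   b = 0, beta = 1, self-weight 1 and weight 2 from each user to her successor,
   everybody starting at -1.  User i is then classified +1 iff
   x_i + 2 x_(i-1) >= 0, and a best response moves x_i up to -2 x_(i-1) when
   that is at most 2 away.  Initially only user 0 is within reach (distance 1);
   every later user would have to travel 3.  Once user t-1 has moved to 0,
   user t is at distance 1 from the boundary, so in round t+1 exactly user t
   moves.  In this one-dimensional setting the best response is unique, so the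
   dynamics is deterministic and the cascade is its only trajectory. *)

From HB Require Import structures.
From mathcomp Require Import all_boot all_order all_algebra.
From mathcomp Require Import reals.
From mathcomp Require Import boolp lra.
Set Implicit Arguments. Unset Strict Implicit. Unset Printing Implicit Defensive.
Import Order.TTheory GRing.Theory Num.Theory.
Local Open Scope ring_scope.

Section Threshold.
Variables (R : realType) (m : nat) (W : 'M[R]_m) (b beta : R).
Hypotheses (W_diag : forall i, W i i = 1) (beta_gt0 : 0 < beta).

Local Notation features := (features R m 1).

Definition threshold (X : features) (i : 'I_m) : R :=
  - b - \sum_(j < m | j != i) W j i * X j 0 0.

Lemma dotp1 (v : 'rV[R]_1) : dotp 1 v = v 0 0.
Proof. by rewrite /dotp big_ord1 mxE mul1r. Qed.

Lemma positive1P X i : positive W 1 b X i <-> threshold X i <= X i 0 0.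
Proof.
rewrite /positive dotp1 /embed summxE.
under eq_bigr do rewrite mxE.
rewrite (bigD1 i) //= W_diag mul1r /threshold.
by split => h; lra.
Qed.

Lemma threshold_upd X i x : threshold (upd X i x) i = threshold X i.
Proof.
by congr (_ - _); apply: eq_bigr => j /negPf ji; rewrite /upd ji.
Qed.

Lemma feasibleP X i x :
  positive W 1 b (upd X i x) i <-> threshold X i <= x 0 0.
Proof. by rewrite positive1P threshold_upd /upd eqxx. Qed.

Lemma cost1E (x y : 'rV[R]_1) : cost beta x y = beta * `|x 0 0 - y 0 0|.
Proof. by rewrite /cost /norm2 big_ord1 !mxE sqrtr_sqr. Qed.

Lemma can_moveP X i :
  (~ positive W 1 b X i /\
     exists x, positive W 1 b (upd X i x) i /\ cost beta (X i) x <= 2) <->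
  X i 0 0 < threshold X i /\ beta * (threshold X i - X i 0 0) <= 2.
Proof.
rewrite positive1P; split => [[/negP] | [xc near]].
  rewrite -ltNge => xc [y [/feasibleP cy]]; rewrite cost1E => near.
  split => //; apply: le_trans near; rewrite ler_pM2l // distrC ler_normr.
  by apply/orP; left; lra.
split; first by apply/negP; rewrite -ltNge.
exists (threshold X i)%:M; rewrite feasibleP cost1E mxE eqxx mulr1n.
by split => //; rewrite distrC ger0_norm //; lra.
Qed.

Lemma closest_above (x c y : R) : x < c ->
  (c <= y /\ forall z, c <= z -> `|x - y| <= `|x - z|) <-> y = c.
Proof.
move=> xc; have dist_above z : c <= z -> `|x - z| = z - x.
  by move=> cz; rewrite distrC ger0_norm; lra.
split => [[cy /(_ c (lexx c))] | ->].
  by rewrite !dist_above //; lra.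
by split => // z cz; rewrite !dist_above //; lra.
Qed.

Lemma mx11_eq_scalar (y : 'rV[R]_1) c : y = c%:M <-> y 0 0 = c.
Proof.
by split => [-> | yc]; [rewrite mxE eqxx mulr1n | rewrite [y]mx11_scalar yc].
Qed.

Lemma best_responseP (X : features) i (y : 'rV[R]_1) :
  X i 0 0 < threshold X i ->
  (positive W 1 b (upd X i y) i /\
     forall x, positive W 1 b (upd X i x) i ->
       cost beta (X i) y <= cost beta (X i) x) <->
  y = (threshold X i)%:M.
Proof.
move=> xc; rewrite mx11_eq_scalar -(closest_above _ xc) feasibleP.
split => -[cy closest]; split => // z.
  by move/(_ z%:M): closest; rewrite feasibleP !cost1E ler_pM2l // !mxE eqxx mulr1n.
by move/feasibleP => cz; rewrite !cost1E ler_pM2l //; apply: closest.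
Qed.

Definition respond (X : features) : features := fun i =>
  let c := threshold X i in
  if (X i 0 0 < c) && (beta * (c - X i 0 0) <= 2) then c%:M else X i.

Lemma stepP X Y : step W 1 b beta X Y <-> Y = respond X.
Proof.
split => [stepXY | -> i] /=.
  apply: funext => i; have [moved stayed] := stepXY i.
  rewrite /respond; case: ifP => [/andP | /negbT/negP not_move].
    move=> move_ok; apply/best_responseP; first by case: move_ok.
    exact/moved/can_moveP.
  by apply: stayed => /can_moveP move_ok; apply: not_move; apply/andP.
split => [/can_moveP [xc near] | not_move].
  by rewrite /respond xc near; apply/best_responseP.
rewrite /respond; case: ifP => // /andP move_ok.
by case: not_move; apply/can_moveP.
Qed.

Lemma dynamicsP X0 traj :
  dynamics W 1 b beta X0 traj <-> forall t, traj t = iter t respond X0.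
Proof.
split => [[traj0 steps] | trajE].
  by elim => [|t IH] //=; rewrite -IH; apply/stepP.
by split => [|t]; rewrite ?trajE //; apply/stepP.
Qed.

End Threshold.

Section PathCascade.
Variables (R : realType) (n : nat).

Definition path_weights : 'M[R]_n :=
  \matrix_(j, i) ((j == i)%:R + 2 * (j.+1 == i :> nat)%:R).

Lemma path_weights_ge0 j i : 0 <= path_weights j i.
Proof. by rewrite mxE addr_ge0 ?mulr_ge0 ?ler0n. Qed.

Lemma path_weights_diag i : path_weights i i = 1.
Proof. by rewrite mxE eqxx gtn_eqF // mulr0 addr0. Qed.

Lemma path_weights_offdiag j i :
  j != i -> path_weights j i = 2 * (j.+1 == i :> nat)%:R.
Proof. by rewrite mxE => /negPf ->; rewrite add0r. Qed.

Lemma sum_path_predecessor (F : nat -> R) (i : 'I_n) :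
  \sum_(j < n | j != i) path_weights j i * F j =
  if (i : nat) is k.+1 then 2 * F k else 0.
Proof.
transitivity (\sum_(j < n | j.+1 == i :> nat) 2 * F j).
  rewrite big_mkcond [RHS]big_mkcond; apply: eq_bigr => j _.
  case: eqVneq => [-> | ji] /=; first by rewrite gtn_eqF.
  rewrite path_weights_offdiag // -mulrA.
  by case: eqP; rewrite ?mul0r ?mulr0 ?mul1r.
case: i => [[|k] /= ki]; first by rewrite big_pred0.
rewrite (eq_bigl (fun j : 'I_n => j == k :> nat)) //.
by rewrite (big_ord1_eq _ (fun j => 2 * F j)) ifT ?(ltnW ki).
Qed.

Definition cascade (t : nat) : features R n 1 :=
  fun k => (if (k < t)%N then 0 else -1)%:M.

Lemma cascadeE t k : cascade t k 0 0 = if (k < t)%N then 0 else -1.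
Proof. by rewrite mxE eqxx mulr1n. Qed.

Lemma threshold_cascade t i :
  threshold path_weights 0 (cascade t) i = if (t < i)%N then 2 else 0.
Proof.
rewrite /threshold oppr0 sub0r.
under eq_bigr do rewrite cascadeE.
rewrite (sum_path_predecessor (fun j => if (j < t)%N then 0 else -1)).
case: i => [[|k] _] /=; first by rewrite oppr0.
by rewrite ltnS; case: leqP => _; rewrite ?mulr0 ?oppr0 ?mulrN1 ?opprK.
Qed.

Lemma respond_cascade t : respond path_weights 0 1 (cascade t) = cascade t.+1.
Proof.
apply: funext => i.
rewrite /respond threshold_cascade cascadeE /cascade ltnS.
case: (ltngtP i t) => _.
- by rewrite ltxx.
- by case: ifP => // /andP [_ too_far]; exfalso; lra.
- by rewrite ifT //; apply/andP; split; lra.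
Qed.

Lemma iter_respond_cascade t :
  iter t (respond path_weights 0 1) (cascade 0) = cascade t.
Proof. by elim: t => [|t IH] //=; rewrite IH respond_cascade. Qed.

Lemma cascade_moves t i : cascade t.+1 i <> cascade t i <-> (i : nat) = t.
Proof.
rewrite /cascade ltnS leq_eqVlt; case: eqP => [-> | it] /=.
  by rewrite ltnn; split => // _ /mx11_eq_scalar; rewrite mxE mul0rn; lra.
by split => [[] | /it].
Qed.

End PathCascade.

Theorem proposition3 (R : realType) (n : nat) : (0 < n)%N ->
  exists (m l : nat) (W : 'M[R]_m) (X0 : 'I_m -> 'rV[R]_l)
         (theta : 'rV[R]_l) (b beta : R),
    0 < beta /\
    (forall j i : 'I_m, 0 <= W j i) /\
    (exists traj, dynamics W theta b beta X0 traj) /\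
    (forall traj, dynamics W theta b beta X0 traj ->
       (exists i, moves traj 1 i /\ forall j, moves traj 1 j -> j = i) /\
       (forall t, (1 <= t <= n)%N -> exists i, moves traj t i)).
Proof.
move=> n_gt0; exists n, 1%N, (path_weights R n), (@cascade R n 0), 1, 0, 1.
have cascadeP traj : dynamics (path_weights R n) 1 0 1 (@cascade R n 0) traj <->
                     forall t, traj t = @cascade R n t.
  rewrite (dynamicsP _ (@path_weights_diag R n) ltr01).
  by split => trajE t; rewrite trajE ?iter_respond_cascade.
split; first exact: ltr01.
split; first exact: path_weights_ge0.
split; first by exists (@cascade R n); apply/cascadeP.
move=> traj /cascadeP trajE.
have movesE t i : moves traj t.+1 i <-> (i : nat) = t.
  by rewrite /moves /= !trajE; apply: cascade_moves.
split.
  by exists (Ordinal n_gt0); split => [|j /movesE j0]; [apply/movesE | apply: val_inj].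
by move=> [//|t] /andP [_ tn]; exists (Ordinal tn); apply/movesE.
Qed.
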